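(* Let $k\ge2$ be an integer and $n\in\mathbb Z$. Then $\det(L_k^{(n)})=\det(L_k^{(0)})$ if $k$ is odd, and $\det(L_k^{(n)})=(-1)^n\det(L_k^{(0)})$ if $k$ is even.
   Context: Fix an integer $k\ge2$. Let $Q_k$ be the $k\times k$ matrix whose first row is all ones, with $(Q_k)_{i+1,i}=1$ for $1\le i\le k-1$ and all other entries $0$, and for $r\in\mathbb Z$ let $Q_k^r$ denote its $r$-th power. The generalized Lucas sequence of order $k$, $(l_{k,n})_{n\in\mathbb Z}$, is the two-sided sequence satisfying $l_{k,n+k}=l_{k,n+k-1}+\dots+l_{k,n}$ for all $n\in\mathbb Z$ with initial values $l_{k,r}=\operatorname{trace}(Q_k^r)$ for $0\le r\le k-1$ (so $l_{k,0}=k$ and $l_{k,r}=2^r-1$ for $1\le r\le k-1$). For $n\in\mathbb Z$ the generalized Lucas matrix $L_k^{(n)}$ is the $k\times k$ matrix with entries $(L_k^{(n)})_{i,1}=l_{k,k+n-i}$ and $(L_k^{(n)})_{i,j}=\sum_{m=n-i+j-1}^{k+n-i-1} l_{k,m}$ for $2\le j\le k$, $1\le i\le k$. *)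

From HB Require Import structures.
From mathcomp Require Import all_boot all_order all_algebra.
Set Implicit Arguments. Unset Strict Implicit. Unset Printing Implicit Defensive.
Import Order.TTheory GRing.Theory Num.Theory.
Local Open Scope ring_scope.

Definition Qmat (k : nat) : 'M[int]_k :=
  \matrix_(i < k, j < k) (if (i == 0%N :> nat) then 1 else if (i == j.+1 :> nat) then 1 else 0).

Definition is_gen_lucas (k : nat) (l : int -> int) : Prop :=
  (forall n : int, l (n + k%:Z) = \sum_(t < k) l (n + t%:Z)) /\
  (forall r : nat, (r < k)%N -> l r%:Z = \tr (Qmat k ^+ r)).

Definition zsum (l : int -> int) (a b : int) : int :=
  if a <= b then \sum_(t < absz (b - a + 1)) l (a + t%:Z) else 0.

(* generalized Lucas matrix L_k^(n); entries 1-indexed in the paper,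
   here i, j : 'I_k stand for paper indices i+1, j+1. *)
Definition lucas_mat (k : nat) (l : int -> int) (n : int) : 'M[int]_k :=
  \matrix_(i < k, j < k)
    (if (j == 0%N :> nat) then l (k%:Z + n - (i.+1)%:Z)
     else zsum l (n - (i.+1)%:Z + (j.+1)%:Z - 1) (k%:Z + n - (i.+1)%:Z - 1)).

(* Multiplying by the companion matrix Q_k shifts the Lucas matrix: row 0 of
   Q_k sums all rows, which is the recurrence, while the subdiagonal moves row i
   to row i + 1. Hence L^(n+1) = Q_k L^(n), and since det Q_k = (-1)^(k-1) we
   get det L^(n) = (-1)^((k-1) n) det L^(0) for every integer n. *)

From HB Require Import structures.
From mathcomp Require Import all_boot all_order all_algebra.
From mathcomp Require Import zify ring.
Import Order.TTheory GRing.Theory Num.Theory.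
Local Open Scope ring_scope.

Lemma geometric_int_seqE (R : unitRingType) (c : R) (f : int -> R) :
  c \is a GRing.unit -> (forall n, f (n + 1) = c * f n) ->
  forall n, f n = c ^ n * f 0.
Proof.
move=> c_unit f_succ; elim/int_rect => [|n IHn|n IHn]; first by rewrite mul1r.
  by rewrite -[in LHS]addn1 PoszD f_succ IHn mulrA -exprSz.
have f_pred : f (- n.+1%:Z) = c^-1 * f (- n%:Z).
  by rewrite -[- n%:Z](subrK 1) -opprD -addn1 f_succ mulKr.
by rewrite f_pred IHn mulrA -exprz_inv -exprSz exprz_inv.
Qed.

Lemma zsum_ord (l : int -> int) (a : int) (m : nat) :
  zsum l a (a + m%:Z - 1) = \sum_(t < m) l (a + t%:Z).
Proof.
rewrite /zsum; case: m => [|m]; first by rewrite big_ord0 ifF //; lia.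
by rewrite ifT; [have -> : a + m.+1%:Z - 1 - a + 1 = m.+1 by lia | lia].
Qed.

(* Expand along the last column: its only nonzero entry is the top one, whose
   minor is the identity. *)
Lemma det_Qmat k : (0 < k)%N -> \det (Qmat k) = (-1) ^+ k.-1.
Proof.
case: k => // k _; rewrite (expand_det_col _ ord_max) (bigD1 ord0) //= big1 ?addr0.
  rewrite /cofactor.
  have -> : row' ord0 (col' ord_max (Qmat k.+1)) = 1%:M.
    apply/matrixP => a b; rewrite !mxE /= /bump leq0n leqNgt ltn_ord add1n add0n eqSS.
    by rewrite -val_eqE; case: eqP.
  by rewrite det_scalar expr1n mxE mulr1 mul1r.
move=> i i_neq0; rewrite mxE ifF ?ifF ?mul0r //; last exact: negbTE.
by rewrite ltn_eqF // ltnW.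
Qed.

Section LucasRecurrence.

Variables (k : nat) (l : int -> int).
Hypothesis l_rec : forall n : int, l (n + k%:Z) = \sum_(t < k) l (n + t%:Z).

(* The entry (i, j) of [lucas_mat k l n] only depends on [s = n - i - 1] and
   [j]; the recurrence lets the first column [l (k + s)] follow the same
   formula with [j = 0]. *)
Definition lucas_entry (s : int) (j : nat) : int :=
  \sum_(t < k - j) l (s + j%:Z + t%:Z).

Lemma lucas_matE n (i j : 'I_k) :
  lucas_mat k l n i j = lucas_entry (n - i.+1%:Z) j.
Proof.
rewrite mxE /lucas_entry; case: eqP => [-> | _].
  by rewrite subn0 -l_rec; congr l; lia.
have -> : n - i.+1%:Z + j.+1%:Z - 1 = n - i.+1%:Z + j by lia.
have -> : k%:Z + n - i.+1%:Z - 1 = n - i.+1%:Z + j + (k - j)%N%:Z - 1.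
  by have := ltn_ord j; lia.
exact: zsum_ord.
Qed.

Lemma lucas_entry_rec s j :
  lucas_entry (s + k%:Z) j = \sum_(u < k) lucas_entry (s + u%:Z) j.
Proof.
rewrite /lucas_entry [RHS]exchange_big; apply: eq_bigr => t _.
have -> : s + k%:Z + j%:Z + t%:Z = s + j%:Z + t%:Z + k%:Z by ring.
by rewrite l_rec; apply: eq_bigr => u _; congr l; ring.
Qed.

Lemma lucas_mat_succ n : lucas_mat k l (n + 1) = Qmat k *m lucas_mat k l n.
Proof.
apply/matrixP => i j; rewrite lucas_matE !mxE.
under eq_bigr do rewrite lucas_matE !mxE.
case: i => [[|i] lt_i_k] /=.
  under eq_bigr do rewrite mul1r.
  have -> : n + 1 - 1%:Z = n - k%:Z + k%:Z by ring.
  rewrite lucas_entry_rec (reindex_inj rev_ord_inj); apply: eq_bigr => m _.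
  by congr lucas_entry; have := ltn_ord m; rewrite /=; lia.
rewrite (bigD1 (Ordinal (ltnW lt_i_k))) //= eqxx mul1r big1 ?addr0.
  by congr lucas_entry; lia.
move=> m m_neq_i; rewrite eqSS ifF ?mul0r //.
by apply: contraNF m_neq_i => /eqP i_eq_m; apply/eqP/val_inj.
Qed.

Lemma det_lucas_mat n : (0 < k)%N ->
  \det (lucas_mat k l n) = ((-1) ^+ k.-1) ^ n * \det (lucas_mat k l 0).
Proof.
move=> k_gt0; apply: (@geometric_int_seqE _ _ (fun m => \det (lucas_mat k l m))).
  by rewrite unitrX ?unitrN1.
by move=> m; rewrite lucas_mat_succ // det_mulmx det_Qmat.
Qed.

End LucasRecurrence.

Theorem theorem4 (k : nat) (l : int -> int) (n : int) :
  (2 <= k)%N -> is_gen_lucas k l ->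
  (odd k -> \det (lucas_mat k l n) = \det (lucas_mat k l 0)) /\
  (~~ odd k -> \det (lucas_mat k l n) = (-1) ^ n * \det (lucas_mat k l 0)).
Proof.
move=> k_ge2 [l_rec _]; rewrite det_lucas_mat ?(ltnW k_ge2) // -signr_odd.
case: k k_ge2 {l_rec} => // k _ /=.
by split=> [/negbTE -> | /negbNE ->]; rewrite ?expr0 ?exp1rz ?mul1r.
Qed.
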